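(* Let $\Lambda\subseteq\Sigma_A$ and $\Gamma\subseteq\Sigma_B$ be shift spaces. Suppose that $\Phi:\Lambda\to\Gamma$ is a map such that $\Phi(\mathcal O)=\mathcal O$ and such that $C_{\varepsilon}:=\Phi^{-1}(\mathcal O)$ is a finitely defined set in $\Lambda$. Then $\Phi$ is continuous and commutes with the shift map (i.e. $\Phi\circ\sigma=\sigma\circ\Phi$) if, and only if, $\Phi$ is a sliding block code given by $\bigl(\Phi(x)\bigr)_n=\sum_{a\in L_\Gamma\cup\{\varepsilon\}}a\mathbf{1}_{C_a}\circ\sigma^{n-1}(x)$ such that, for all $a\in L_\Gamma$, the set $C_a$ is a finite (possibly empty) union of generalized cylinders of $\Lambda$.
   Context: Alphabets and sequences: $A$ (and similarly $B$) is a countable discrete alphabet, finite or infinite. Let $\varepsilon$ be a new symbol (the empty letter), $\tilde A=A\cup\{\varepsilon\}$. Put $\Sigma_A^{\mathrm{inf}}=A^{\mathbb N}$ and let $\Sigma_A^{\mathrm{fin}}$ be the set of sequences $(x_i)_{i\in\mathbb N}$ in $\tilde A$ containing at least one $\varepsilon$ such that $x_i=\varepsilon$ implies $x_{i+1}=\varepsilon$. The Ott–Tomforde–Willis full shift is $\Sigma_A=\Sigma_A^{\mathrm{inf}}$ if $A$ is finite and $\Sigma_A=\Sigma_A^{\mathrm{inf}}\cup\Sigma_A^{\mathrm{fin}}$ if $A$ is infinite. The length of $x$ is $l(x)=\min\{k-1: x_k=\varepsilon\}$ ($=\infty$ for $x\in A^{\mathbb N}$); a finite sequence of length $k$ is identified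 with the word $x_1\dots x_k$; the constant sequence $\mathcal O=(\varepsilon\varepsilon\varepsilon\dots)$ is the empty sequence (length $0$). For $x\in\Sigma_A^{\mathrm{fin}}$ and finite $F\subset A$, the generalized cylinder is $Z(x,F)=\{y\in\Sigma_A: y_i=x_i \text{ for } 1\le i\le l(x),\ y_{l(x)+1}\notin F\}$, and $Z(x):=Z(x,\emptyset)$. $\Sigma_A$ carries the topology generated by the generalized cylinders (it is compact, metrizable). The shift map is $\sigma((x_i)_{i})=(x_{i+1})_i$ (so $\sigma(\mathcal O)=\mathcal O$). For $\Lambda\subseteq\Sigma_A$: $\Lambda^{\mathrm{fin}}=\Lambda\cap\Sigma_A^{\mathrm{fin}}$, $\Lambda^{\mathrm{inf}}=\Lambda\cap\Sigma_A^{\mathrm{inf}}$; $B_n(\Lambda)\subseteq\tilde A^n$ is the set of words of length $n$ occurring as consecutive subblocks of elements of $\Lambda$, $B(\Lambda)=\bigcup_{n\ge1}B_n(\Lambda)$, and $L_\Lambda=B_1(\Lambda)\setminus\{\varepsilon\}$. For a word $a\in B_n(\Lambda)$, its follower set is $\mathcal F(\Lambda,a)=\{b\in B_1(\Lambda): ab\in B_{n+1}(\Lambda)\}$. A shift space is $\Lambda\subseteq\Sigma_A$ that is closed, satisfies $\sigma(\Lambda)\subseteq\Lambda$, and has the infinite extension property: $\mathcal O\in\Lambda$ iff $L_\Lambda$ is infinite, and a finite sequence $x\neq\mathcal O$ lies in $\Lambda$ iff $|\mathcal F(\Lambda,x)|=\infty$. Generalized cylinders of $\Lambda$ are the sets $Z(x,F)\cap\Lambda$.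 Finitely defined sets: $C\subseteq\Lambda$ is finitely defined in $\Lambda$ if there exist $I,J\subseteq\mathbb N$, integers $\ell_i,n_j\ge0$ and words $b_i,d_j\in B(\Sigma_A)$ ($i\in I$, $j\in J$) with $C=\{x\in\Lambda: (x_1\dots x_{1+\ell_i})=b_i\text{ for some } i\in I\}$ and $\Lambda\setminus C=\{x\in\Lambda: (x_1\dots x_{1+n_j})=d_j \text{ for some } j\in J\}$; its anticipation is $\sup_i\ell_i$. Sliding block codes: given a partition $\{C_a\}_{a\in B\cup\{\varepsilon\}}$ of a shift space $\Lambda\subseteq\Sigma_A$ such that each $C_a$ is finitely defined in $\Lambda$ and $\sigma(C_\varepsilon)\subseteq C_\varepsilon$, the map $\Phi:\Lambda\to\Sigma_B$ with $(\Phi(x))_n=\sum_{a}a\mathbf 1_{C_a}(\sigma^{n-1}(x))$ (i.e. $(\Phi(x))_n$ is the unique $a$ with $\sigma^{n-1}(x)\in C_a$) is called a sliding block code. Here $\mathcal O$ in $\Phi(\mathcal O)=\mathcal O$ and $\Phi^{-1}(\mathcal O)$ denotes the respective empty sequences of $\Sigma_A$ and $\Sigma_B$. *)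

(* Sequences are indexed from 0 (the paper's x_1 is x 0). *)
From mathcomp Require Import all_boot.
Set Implicit Arguments. Unset Strict Implicit. Unset Printing Implicit Defensive.

Section OTW.
Variable A : countType.

(* elements of \tilde A^N ; None is the empty letter epsilon *)
Definition sq := nat -> option A.

Definition finite_alph : Prop := exists s : seq A, forall a : A, a \in s.

Definition infinite_oset (P : option A -> Prop) : Prop :=
  ~ exists s : seq (option A), forall b, P b -> b \in s.
Definition infinite_set (P : A -> Prop) : Prop :=
  ~ exists s : seq A, forall b, P b -> b \in s.

Definition inf_seq (x : sq) : Prop := forall n, x n <> None.
Definition fin_seq (x : sq) : Prop :=
  (exists i, x i = None) /\ (forall i, x i = None -> x i.+1 = None).

Definition SigmaA (x : sq) : Prop := inf_seq x \/ (~ finite_alph /\ fin_seq x).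

Definition emptyseq : sq := fun _ => None.

Definition shift (x : sq) : sq := fun n => x n.+1.

Definition cyl (w : seq A) (F : seq A) (y : sq) : Prop :=
  SigmaA y /\ (forall i, i < size w -> y i = nth None (map Some w) i) /\
  (match y (size w) with None => True | Some c => c \notin F end).

Definition openA (U : sq -> Prop) : Prop :=
  (forall x, U x -> SigmaA x) /\
  forall y, U y -> exists cs : seq (seq A * seq A),
    (forall c, c \in cs -> cyl c.1 c.2 y) /\
    (forall z, SigmaA z -> (forall c, c \in cs -> cyl c.1 c.2 z) -> U z).

Definition closedA (L : sq -> Prop) : Prop :=
  (forall x, L x -> SigmaA x) /\ openA (fun x => SigmaA x /\ ~ L x).

Definition block (L : sq -> Prop) (w : seq (option A)) : Prop :=
  0 < size w /\ exists x, L x /\ exists i, forall j, j < size w -> x (i + j) = nth None w j.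

Definition letters (L : sq -> Prop) (a : A) : Prop := block L [:: Some a].

Definition follower (L : sq -> Prop) (w : seq (option A)) (b : option A) : Prop :=
  block L [:: b] /\ block L (w ++ [:: b]).

Definition prefix_of (x : sq) (w : seq (option A)) : Prop :=
  forall j, j < size w -> x j = nth None w j.

Definition shift_space (L : sq -> Prop) : Prop :=
  closedA L /\
  (forall x, L x -> L (shift x)) /\
  (L emptyseq <-> infinite_set (letters L)) /\
  (forall (x : sq) (k : nat), fin_seq x -> 0 < k -> x k = None ->
     (forall i, i < k -> x i <> None) ->
     (L x <-> infinite_oset (follower L (mkseq x k)))).

Definition fin_defined (L C : sq -> Prop) : Prop :=
  (forall x, C x -> L x) /\
  exists (I : nat -> Prop) (b : nat -> seq (option A))
         (J : nat -> Prop) (d : nat -> seq (option A)),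
    (forall i, I i -> block SigmaA (b i)) /\
    (forall j, J j -> block SigmaA (d j)) /\
    (forall x, C x <-> (L x /\ exists i, I i /\ prefix_of x (b i))) /\
    (forall x, (L x /\ ~ C x) <-> (L x /\ exists j, J j /\ prefix_of x (d j))).

Definition fin_union_cyl (L C : sq -> Prop) : Prop :=
  exists cs : seq (seq A * seq A),
    forall x, C x <-> (L x /\ exists c, c \in cs /\ cyl c.1 c.2 x).

End OTW.

Arguments emptyseq {A}.

Definition continuous_on (A B : countType) (L : sq A -> Prop) (Phi : sq A -> sq B) : Prop :=
  forall V : sq B -> Prop, openA V ->
    exists U : sq A -> Prop, openA U /\ forall x, L x -> (V (Phi x) <-> U x).

(* The first-coordinate map x |-> Phi(x)_1 of a continuous shift-commuting
   Phi has clopen level sets C_a in Lambda, and Phi is the sliding block code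
   they define.  A set that is clopen in the compact space Lambda is a finite
   union of generalized cylinders: otherwise some word can never be covered,
   and by a Koenig-type argument one of its one-letter extensions cannot be
   covered either; the infinite path so obtained converges to a point whose
   decided neighbourhood contains a cylinder around a long prefix, which is
   covered after all.  Sets determined by finite prefixes are finitely
   defined, since words over a countable alphabet can be enumerated.
   Conversely, if each C_b is a finite union of generalized cylinders, a
   cylinder condition on Phi(x) is a finite conjunction of conditions
   sigma^i x in C_b or not in C_b, and each of these is open because the
   letters of x before position i are defined, so the cylinders of C_b can be
   pulled back along the shift. *)

From mathcomp Require Import all_boot.
From Stdlib Require Import Classical ClassicalEpsilon FunctionalExtensionality.
Set Implicit Arguments. Unset Strict Implicit. Unset Printing Implicit Defensive.

Section Cylinders.
Variable A : countType.
Implicit Types (x y z : sq A) (L : sq A -> Prop) (w : seq A).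

Definition cyls (cs : seq (seq A * seq A)) y : Prop :=
  forall c, c \in cs -> cyl c.1 c.2 y.

Definition nbhd_in L x (P : sq A -> Prop) : Prop :=
  exists cs, cyls cs x /\ forall y, L y -> cyls cs y -> P y.

Lemma openA_cyl w F : openA (cyl w F).
Proof.
split=> [x []//|y Hy]; exists [:: (w, F)]; split; first by move=> c /[!inE] /eqP ->.
by move=> z _ /(_ _ (mem_head _ _)).
Qed.

Lemma cyls_cat cs1 cs2 y : cyls (cs1 ++ cs2) y <-> cyls cs1 y /\ cyls cs2 y.
Proof.
split=> [H|[H1 H2] c]; first by split=> c Hc; apply: H; rewrite mem_cat Hc ?orbT.
by rewrite mem_cat => /orP[] Hc; [apply: H1|apply: H2].
Qed.

Lemma SigmaA_shift x : SigmaA x -> SigmaA (shift x).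
Proof.
case=> [Hi|[Hf [[i Hi] Hs]]]; [by left=> n; apply: Hi|right; split=> //].
by split=> [|j]; [exists i; rewrite /shift Hs|apply: Hs].
Qed.

Lemma SigmaA_iter n x : SigmaA x -> SigmaA (iter n (@shift A) x).
Proof. by elim: n => [//|n IH] Sx /=; apply/SigmaA_shift/IH. Qed.

Lemma iter_shiftE n x m : iter n (@shift A) x m = x (n + m).
Proof. by elim: n x m => [//|n IH] x m; rewrite iterSr IH /shift addSn. Qed.

Lemma SigmaA_None_ge x k n : SigmaA x -> x k = None -> k <= n -> x n = None.
Proof.
case=> [Hi|[_ [_ Hs]]] Hk; first by case: (Hi k).
elim: n => [|n IH]; first by rewrite leqn0 => /eqP <-.
by rewrite leq_eqVlt ltnS => /orP[/eqP <- //|/IH]; apply: Hs.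
Qed.

Lemma cyl_cons a w F y : SigmaA y ->
  cyl (a :: w) F y <-> y 0 = Some a /\ cyl w F (shift y).
Proof.
move=> Sy; split=> [[_ [Hp Hm]]|[H0 [_ [Hp Hm]]]].
  by split; [apply: (Hp 0)|split; [apply: SigmaA_shift|split=> // i /(Hp i.+1)]].
by split=> //; split=> // [[|i]] //= /Hp.
Qed.

Lemma cyl_letter (b : A) y : SigmaA y -> cyl [:: b] [::] y <-> y 0 = Some b.
Proof.
move=> Sy; split=> [[_ [Hp _]]|H]; first exact: (Hp 0).
by split=> //; split; [case|case: (y 1)].
Qed.

Lemma cyl_not_letter (b : A) y : SigmaA y -> cyl [::] [:: b] y <-> y 0 <> Some b.
Proof.
move=> Sy; rewrite /cyl /=; case: (y 0) => [c|]; last by split=> // _; split.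
rewrite inE; split=> [[_ [_ /eqP Hcb]] [Ecb]|Hcb]; first by apply: Hcb; rewrite Ecb.
by split=> //; split=> //; apply/eqP => Ecb; apply: Hcb; rewrite Ecb.
Qed.

Lemma cyls_iter_shift n x cs' : SigmaA x -> (forall j, j < n -> x j <> None) ->
  cyls cs' (iter n (@shift A) x) ->
  exists cs, cyls cs x /\ forall y, cyls cs y -> cyls cs' (iter n (@shift A) y).
Proof.
elim: n x cs' => [|n IH] x cs' Sx Hn Hx; first by exists cs'.
rewrite iterSr in Hx.
have [cs'' [H1 H2]] :=
  IH (shift x) cs' (SigmaA_shift Sx) (fun j Hj => Hn j.+1 Hj) Hx.
case E: (x 0) => [a|]; last by case: (Hn 0 erefl).
exists [seq (a :: c.1, c.2) | c <- cs'']; split.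
  by move=> _ /mapP[c Hc ->] /=; apply/cyl_cons => //; split=> //; apply: H1.
move=> y Hy; rewrite iterSr; apply: H2 => c Hc.
have /= Hcy := Hy _ (map_f (fun c => (a :: c.1, c.2)) Hc).
by case/(cyl_cons _ _ _ Hcy.1): Hcy.
Qed.

Lemma cyls_avoid_cyl w F y : SigmaA y -> ~ cyl w F y ->
  exists cs, cyls cs y /\ forall z, cyls cs z -> ~ cyl w F z.
Proof.
elim: w y => [|a w IH] y Sy Hn.
  case E: (y 0) => [f|]; last by case: Hn; split=> //; split=> //=; rewrite E.
  have Hf : f \in F by apply/negPn/negP=> Hf; apply: Hn; split=> //=; rewrite E.
  exists [:: ([:: f], [::])]; split=> [c /[!inE] /eqP -> /=|z Hz [Sz [_ /=]]].
    exact/cyl_letter.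
  by have /(cyl_letter _ Sz) -> := Hz _ (mem_head _ _); rewrite Hf.
case: (y 0 =P Some a) => Ha; last first.
  exists [:: ([::], [:: a])]; split=> [c /[!inE] /eqP -> /=|z Hz Hcz].
    exact/cyl_not_letter.
  have /(cyl_not_letter _ Hcz.1) := Hz _ (mem_head _ _).
  by case/(cyl_cons _ _ _ Hcz.1): Hcz.
have Hn' : ~ cyl w F (shift y) by move=> Hw; apply: Hn; apply/cyl_cons.
have [cs' [H1 H2]] := IH _ (SigmaA_shift Sy) Hn'.
have y0 : forall j, j < 1 -> y j <> None by case=> // _; rewrite Ha.
have [cs [Hcs Hpre]] := @cyls_iter_shift 1 y cs' Sy y0 H1.
exists cs; split=> // z Hz Hcz.
by case/(cyl_cons _ _ _ Hcz.1): Hcz => _; apply: H2; apply: Hpre.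
Qed.

Lemma cyls_avoid_cyls (cs0 : seq (seq A * seq A)) y :
  SigmaA y -> (forall c, c \in cs0 -> ~ cyl c.1 c.2 y) ->
  exists cs, cyls cs y /\ forall z, cyls cs z -> forall c, c \in cs0 -> ~ cyl c.1 c.2 z.
Proof.
elim: cs0 => [|c0 cs0 IH] Sy Hn; first by exists [::].
have [cs1 [H1 H1']] := cyls_avoid_cyl Sy (Hn _ (mem_head _ _)).
have [cs2 [H2 H2']] := IH Sy (fun c Hc => Hn c (mem_behead (s := c0 :: cs0) Hc)).
exists (cs1 ++ cs2); split; first exact/cyls_cat.
by move=> z /cyls_cat[Hz1 Hz2] c /[!inE] /orP[/eqP ->|]; [apply: H1'|apply: H2'].
Qed.

Lemma nbhd_in_mono L x (P Q : sq A -> Prop) : nbhd_in L x P ->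
  (forall y, L y -> P y -> Q y) -> nbhd_in L x Q.
Proof. by case=> cs [H1 H2] HPQ; exists cs; split=> // y Ly /(H2 _ Ly)/(HPQ _ Ly). Qed.

Lemma nbhd_in_and L x (P Q : sq A -> Prop) : nbhd_in L x P -> nbhd_in L x Q ->
  nbhd_in L x (fun y => P y /\ Q y).
Proof.
case=> cs1 [H1 H1'] [cs2 [H2 H2']]; exists (cs1 ++ cs2); split; first exact/cyls_cat.
by move=> y Ly /cyls_cat[? ?]; split; [apply: H1'|apply: H2'].
Qed.

Lemma nbhd_in_all (T : eqType) L x (P : T -> sq A -> Prop) (s : seq T) :
  (forall t, t \in s -> nbhd_in L x (P t)) ->
  nbhd_in L x (fun y => forall t, t \in s -> P t y).
Proof.
elim: s => [|t s IH] H; first by exists [::].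
have Hs := IH (fun u Hu => H u (mem_behead (s := t :: s) Hu)).
apply: (nbhd_in_mono (nbhd_in_and (H t (mem_head _ _)) Hs)) => y _ [Ht Hsy] u.
by rewrite inE => /orP[/eqP ->|/Hsy].
Qed.

Lemma nbhd_in_ltn L x (P : nat -> sq A -> Prop) n :
  (forall j, j < n -> nbhd_in L x (P j)) ->
  nbhd_in L x (fun y => forall j, j < n -> P j y).
Proof.
move=> H; have /nbhd_in_all : forall j, j \in iota 0 n -> nbhd_in L x (P j).
  by move=> j; rewrite mem_iota; apply: H.
by move/nbhd_in_mono; apply=> y _ Hy j Hj; apply: Hy; rewrite mem_iota.
Qed.

End Cylinders.

Section PrefixDetermined.
Variable A : countType.
Implicit Types (x y : sq A) (L C : sq A -> Prop) (w : seq A).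

Lemma cyl_agree w F x y : cyl w F x -> SigmaA y ->
  (forall j, j <= size w -> y j = x j) -> cyl w F y.
Proof.
case=> _ [Hp Hm] Sy Ha; split=> //; split; last by rewrite Ha.
by move=> i Hi; rewrite Ha ?(ltnW Hi) //; apply: Hp.
Qed.

Lemma cyls_agree cs x y : cyls cs x -> SigmaA y ->
  (forall j, j <= \max_(c <- cs) size c.1 -> y j = x j) -> cyls cs y.
Proof.
move=> Hx Sy Ha c Hc; apply: cyl_agree (Hx _ Hc) Sy _ => j Hj.
by apply: Ha; apply: (leq_trans Hj); exact: leq_bigmax_seq.
Qed.

Definition prefix_determined L (P : sq A -> Prop) x : Prop :=
  exists N, forall y, L y -> (forall j, j <= N -> y j = x j) -> P y.

Lemma nbhd_in_prefix_determined L x P : (forall y, L y -> SigmaA y) ->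
  nbhd_in L x P -> prefix_determined L P x.
Proof.
move=> LS [cs [H1 H2]]; exists (\max_(c <- cs) size c.1) => y Ly Ha.
exact/H2/(cyls_agree H1 (LS _ Ly) Ha).
Qed.

(* The index sets of [fin_defined] are [nat], so words are indexed by their
   [pickle] codes; an index that codes no word decodes to [::]. *)
Definition word_of (i : nat) : seq (option A) := odflt [::] (unpickle i).

Definition forcing_word L (P : sq A -> Prop) (i : nat) : Prop :=
  block (@SigmaA A) (word_of i) /\ forall y, L y -> prefix_of y (word_of i) -> P y.

Lemma prefix_of_mkseq x y N :
  prefix_of y (mkseq x N.+1) <-> forall j, j <= N -> y j = x j.
Proof.
split=> H j; rewrite ?size_mkseq => Hj; first by rewrite H ?size_mkseq // nth_mkseq.
by rewrite nth_mkseq // H.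
Qed.

Lemma forcing_word_prefix L P x : (forall y, L y -> SigmaA y) -> L x ->
  prefix_determined L P x -> exists i, forcing_word L P i /\ prefix_of x (word_of i).
Proof.
move=> LS Lx [N HN]; exists (pickle (mkseq x N.+1)); rewrite /forcing_word /word_of pickleK /=.
split; last exact/prefix_of_mkseq.
split=> [|y Ly /prefix_of_mkseq]; last exact: HN.
split; first by rewrite size_mkseq.
by exists x; split; [apply: LS|exists 0 => j; rewrite size_mkseq => Hj; rewrite nth_mkseq].
Qed.

Lemma fin_defined_ext L C C' :
  fin_defined L C -> (forall x, C x <-> C' x) -> fin_defined L C'.
Proof.
case=> CL [I [b [J [d [Hb [Hd [H1 H2]]]]]]] HC; split=> [x /HC /CL //|].
exists I, b, J, d; do 2!split=> //; split=> x; first by rewrite -HC.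
by rewrite -H2; split=> -[Lx Hx]; split=> // Cx; apply/Hx/HC.
Qed.

Lemma fin_defined_of_prefix_determined L C : (forall y, L y -> SigmaA y) ->
  (forall y, C y -> L y) ->
  (forall x, C x -> prefix_determined L C x) ->
  (forall x, L x -> ~ C x -> prefix_determined L (fun y => ~ C y) x) ->
  fin_defined L C.
Proof.
move=> LS CL HC HnC; split=> //.
exists (forcing_word L C), (@word_of), (forcing_word L (fun y => ~ C y)), (@word_of).
split; first by move=> i [].
split; first by move=> i [].
split=> x; split.
- by move=> Cx; split; [apply: CL|apply: forcing_word_prefix (CL _ Cx) (HC _ Cx)].
- by case=> Lx [i [[_ Hi] Hp]]; apply: Hi.
- by case=> Lx Cx; split; [|apply: forcing_word_prefix (HnC _ Lx Cx)].
- by case=> Lx [i [[_ Hi] Hp]]; split; [|apply: Hi].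
Qed.

End PrefixDetermined.

Section Compactness.
Variable A : countType.
Implicit Types (x y z : sq A) (L C D : sq A -> Prop) (w : seq A).

Definition decides L C (P : sq A -> Prop) : Prop :=
  (forall z, L z -> P z -> C z) \/ (forall z, L z -> P z -> ~ C z).

Definition locally_decided L C x : Prop := exists cs, cyls cs x /\ decides L C (cyls cs).

Definition cyl_cover_on L C D : Prop := exists cs : seq (seq A * seq A),
  (forall x, L x -> (exists c, c \in cs /\ cyl c.1 c.2 x) -> C x) /\
  (forall x, L x -> D x -> C x -> exists c, c \in cs /\ cyl c.1 c.2 x).

Definition word_prefix w x : Prop := prefix_of x (map Some w).

Definition word_seq w : sq A := nth None (map Some w).

Lemma decides_sub L C (P Q : sq A -> Prop) :
  (forall z, L z -> P z -> Q z) -> decides L C Q -> decides L C P.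
Proof. by move=> HPQ [HQ|HQ]; [left|right] => z Lz /(HPQ _ Lz); apply: HQ. Qed.

Lemma cyl_cover_on_sub L C D D' : (forall x, L x -> D x -> D' x) ->
  cyl_cover_on L C D' -> cyl_cover_on L C D.
Proof. by move=> HD [cs [H1 H2]]; exists cs; split=> // x Lx /(HD _ Lx); apply: H2. Qed.

Lemma cyl_cover_onU L C D D' : cyl_cover_on L C D -> cyl_cover_on L C D' ->
  cyl_cover_on L C (fun x => D x \/ D' x).
Proof.
case=> cs [H1 H2] [cs' [H1' H2']]; exists (cs ++ cs'); split.
  move=> x Lx [c []]; rewrite mem_cat => /orP[] Hc Hx.
    by apply: H1 => //; exists c.
  by apply: H1' => //; exists c.
move=> x Lx [Dx|Dx] Cx.
  by have [c [Hc Hx]] := H2 x Lx Dx Cx; exists c; rewrite mem_cat Hc.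
by have [c [Hc Hx]] := H2' x Lx Dx Cx; exists c; rewrite mem_cat Hc orbT.
Qed.

Lemma cyl_cover_on_big (T : eqType) L C (D : T -> sq A -> Prop) (s : seq T) :
  (forall t, t \in s -> cyl_cover_on L C (D t)) ->
  cyl_cover_on L C (fun x => exists t, t \in s /\ D t x).
Proof.
elim: s => [|t s IH] H; first by exists [::]; split=> [x _ [c []]|x _ [t []]].
apply: cyl_cover_on_sub (cyl_cover_onU (H t (mem_head _ _))
  (IH (fun u Hu => H u (mem_behead (s := t :: s) Hu)))) => x _ [u [/[!inE]]].
by case/orP=> [/eqP -> Dx|Hu Dx]; [left|right; exists u].
Qed.

Lemma cyl_cover_on_cyl L C w F : decides L C (cyl w F) -> cyl_cover_on L C (cyl w F).
Proof.
case=> HC; last by exists [::]; split=> [x _ [c []]|x Lx /(HC _ Lx)].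
exists [:: (w, F)]; split; last by move=> x _ Hx _; exists (w, F); rewrite mem_head.
by move=> x Lx [c [/[!inE] /eqP -> /= Hx]]; apply: HC.
Qed.

Lemma word_prefix_rcons w c x :
  word_prefix w x -> x (size w) = Some c -> word_prefix (rcons w c) x.
Proof.
move=> Hp Hx i; rewrite size_map size_rcons ltnS leq_eqVlt -cats1 map_cat nth_cat size_map.
case/orP=> [/eqP ->|Hi]; first by rewrite ltnn subnn.
by rewrite Hi; apply: Hp; rewrite size_map.
Qed.

Lemma cyl_word_prefix w F y : SigmaA y -> word_prefix w y ->
  (forall c, y (size w) = Some c -> c \notin F) -> cyl w F y.
Proof.
move=> Sy Hp HF; split=> //; split=> [i Hi|]; first by apply: Hp; rewrite size_map.
by case E: (y _) => [c|] //; apply: HF.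
Qed.

Lemma SigmaA_word_seq w : ~ finite_alph A -> SigmaA (word_seq w).
Proof.
move=> Hinf; right; split=> //; split=> [|i].
  by exists (size w); rewrite /word_seq nth_default ?size_map.
rewrite /word_seq => Hi; rewrite nth_default // size_map.
case: (ltnP i (size w)) => [Hlt|/leqW //].
by case: w Hlt Hi => // a w' Hlt; rewrite (nth_map a).
Qed.

Lemma cyls_word_seq cs w y : cyls cs (word_seq w) ->
  cyl w (flatten [seq c.2 | c <- cs]) y -> cyls cs y.
Proof.
move=> Hcs [Sy [Hp Hm]] [v F] Hvf; have [_ [/= Hv Hvm]] := Hcs _ Hvf.
have Hsz : size v <= size w.
  rewrite leqNgt; apply/negP => Hlt; have := Hv _ Hlt.
  have [a _] : exists a : A, True by case: (v) Hlt => // a; exists a.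
  by rewrite /word_seq nth_default ?size_map // (nth_map a).
split=> //; split=> [i Hi|]; first by rewrite Hp ?(leq_trans Hi Hsz) //; apply: Hv.
move: Hsz; rewrite leq_eqVlt => /orP[/eqP Heq|Hlt]; last by move: Hvm; rewrite Hp.
rewrite Heq; move: Hm; case: (y (size w)) => // c; apply: contra => HcF.
by apply/flattenP; exists F => //; apply/mapP; exists (v, F).
Qed.

Section Koenig.
Variables (L C : sq A -> Prop).
Hypothesis LS : forall y, L y -> SigmaA y.
Hypothesis decided : forall x, SigmaA x -> locally_decided L C x.

(* Over an infinite alphabet the word w is itself a point of Sigma_A; its
   decided neighbourhood contains some Z(w, F), and the finitely many letters
   of F are handled by the one-letter extensions of w. *)
Lemma cyl_cover_on_rcons w :
  (forall c, cyl_cover_on L C (word_prefix (rcons w c))) -> cyl_cover_on L C (word_prefix w).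
Proof.
move=> Hrc; pose ext s :=
  @cyl_cover_on_big _ L C (fun c => word_prefix (rcons w c)) s (fun c _ => Hrc c).
case: (classic (finite_alph A)) => [[s Hs]|Hinf].
  apply: cyl_cover_on_sub (ext s) => x Lx Hp.
  have Hix : inf_seq x by case: (LS Lx) => // [[Hf _]]; case: Hf; exists s.
  case E: (x (size w)) => [c|]; last by case: (Hix _ E).
  by exists c; split; [apply: Hs|apply: word_prefix_rcons].
have [cs0 [Hcs0 Hd]] := decided (SigmaA_word_seq w Hinf).
pose F := flatten [seq c.2 | c <- cs0].
have HF : cyl_cover_on L C (cyl w F).
  by apply/cyl_cover_on_cyl/(decides_sub _ Hd) => z _; apply: cyls_word_seq.
apply: cyl_cover_on_sub (cyl_cover_onU HF (ext F)) => x Lx Hp.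
case E: (x (size w)) => [c|]; last by left; apply: cyl_word_prefix (LS Lx) Hp _ => c; rewrite E.
case: (boolP (c \in F)) => HcF; first by right; exists c; split=> //; apply: word_prefix_rcons.
by left; apply: cyl_word_prefix (LS Lx) Hp _ => c'; rewrite E => -[<-].
Qed.

Lemma cyl_cover_on_nil : cyl_cover_on L C (word_prefix [::]).
Proof.
pose bad w := ~ cyl_cover_on L C (word_prefix w).
apply: NNPP => bad_nil; rewrite -/(bad [::]) in bad_nil.
have step w : bad w -> exists c, bad (rcons w c).
  move=> Hw; apply: NNPP => Hn; apply/Hw/cyl_cover_on_rcons => c.
  by apply: NNPP => Hc; apply: Hn; exists c.
have [a0 _] := step _ bad_nil.
have [f fP] : exists f : seq A -> A, forall w, bad w -> bad (rcons w (f w)).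
  apply: (ClassicalEpsilon.choice (fun w c => bad w -> bad (rcons w c))) => w.
  by case: (classic (bad w)) => [/step[c Hc]|Hw]; [exists c|exists a0].
pose p n := iter n (fun w => rcons w (f w)) [::].
have p_bad n : bad (p n) by elim: n => //= n; apply: fP.
pose a i := f (p i).
have pE n : p n = mkseq a n by elim: n => // n IH; rewrite mkseqS -IH.
have Sx : SigmaA (fun i => Some (a i)) by left.
have [cs0 [Hcs0 Hd]] := decided Sx.
pose N := (\max_(c <- cs0) size c.1).+1.
apply: (p_bad N); rewrite pE.
have sub y : cyl (mkseq a N) [::] y -> cyls cs0 y.
  case=> Sy [Hp _]; apply: cyls_agree Hcs0 Sy _ => j Hj.
  by rewrite Hp ?size_mkseq // (nth_map a0) ?size_mkseq // nth_mkseq.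
apply: cyl_cover_on_sub (cyl_cover_on_cyl (decides_sub (fun z _ => sub z) Hd)).
by move=> x Lx Hp; apply: cyl_word_prefix (LS Lx) Hp _.
Qed.

End Koenig.

Lemma fin_union_cyl_of_clopen L C : closedA L -> (forall y, C y -> L y) ->
  (forall x, C x -> nbhd_in L x C) ->
  (forall x, L x -> ~ C x -> nbhd_in L x (fun z => ~ C z)) ->
  fin_union_cyl L C.
Proof.
move=> [LS [_ Hop]] CL HC HnC.
have decided x : SigmaA x -> locally_decided L C x.
  move=> Sx; case: (classic (L x)) => Lx; last first.
    have [cs [Hcs Hz]] := Hop x (conj Sx Lx); exists cs; split=> //.
    by left=> z Lz /(Hz _ (LS _ Lz)) [].
  case: (classic (C x)) => Cx; [have [cs [? ?]] := HC x Cx|have [cs [? ?]] := HnC x Lx Cx].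
    by exists cs; split=> //; left.
  by exists cs; split=> //; right.
have [cs [H1 H2]] := cyl_cover_on_nil LS decided.
exists cs => x; split=> [Cx|[Lx Hx]]; last exact: H1.
by split; [apply: CL|apply: H2 (CL _ Cx) _ Cx].
Qed.

End Compactness.

Lemma shift_stable_iter (A : countType) (L : sq A -> Prop) n x :
  (forall y, L y -> L (shift y)) -> L x -> L (iter n (@shift A) x).
Proof. by move=> Lsh; elim: n => [//|n IH] Lx /=; apply/Lsh/IH. Qed.

Definition sliding_block_code (A B : countType) (L : sq A -> Prop) (G : sq B -> Prop)
    (Phi : sq A -> sq B) (C : option B -> sq A -> Prop) : Prop :=
  (forall a x, C a x -> L x) /\
  (forall x, L x -> exists a, C a x /\ forall a', C a' x -> a' = a) /\
  (forall b : B, ~ letters G b -> forall x, ~ C (Some b) x) /\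
  (forall a, fin_defined L (C a)) /\
  (forall x, C None x -> C None (shift x)) /\
  (forall x, L x -> forall n a, Phi x n = a <-> C a (iter n (@shift A) x)) /\
  (forall b : B, letters G b -> fin_union_cyl L (C (Some b))).

Definition first_letter_class (A B : countType) (L : sq A -> Prop) (Phi : sq A -> sq B)
    (a : option B) (x : sq A) : Prop := L x /\ Phi x 0 = a.

Section ContinuousShiftCommuting.
Variables (A B : countType) (L : sq A -> Prop) (G : sq B -> Prop) (Phi : sq A -> sq B).
Hypothesis HL : shift_space L.
Hypothesis PhiG : forall x, L x -> G (Phi x).
Hypothesis GS : forall y, G y -> SigmaA y.
Hypothesis Phi_cont : continuous_on L Phi.
Hypothesis Phi_shift : forall x, L x -> forall n, Phi (shift x) n = shift (Phi x) n.

Let LS : forall y, L y -> SigmaA y := HL.1.1.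
Let Lsh : forall x, L x -> L (shift x) := HL.2.1.
Let PhiS x (Lx : L x) : SigmaA (Phi x) := GS (PhiG Lx).

Lemma Phi_iter_shift n x m : L x -> Phi (iter n (@shift A) x) m = Phi x (n + m).
Proof.
by elim: n x m => [//|n IH] x m Lx; rewrite iterSr IH ?Phi_shift //; apply: Lsh.
Qed.

Lemma nbhd_in_of_open (V : sq B -> Prop) (P : sq A -> Prop) x : openA V ->
  (forall y, L y -> V (Phi y) <-> P y) -> L x -> P x -> nbhd_in L x P.
Proof.
move=> HV HVP Lx Px; have [U [[_ Hop] HUe]] := Phi_cont HV.
have [cs [Hcs Hz]] := Hop x (proj1 (HUe x Lx) (proj2 (HVP x Lx) Px)).
by exists cs; split=> // y Ly Hy; apply/HVP/HUe/Hz => //; apply: LS.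
Qed.

Lemma nbhd_in_Phi0_eq b x : L x -> Phi x 0 = Some b ->
  nbhd_in L x (fun y => Phi y 0 = Some b).
Proof.
move=> Lx; apply: (nbhd_in_of_open (openA_cyl [:: b] [::])) Lx => y Ly.
exact: cyl_letter (PhiS Ly).
Qed.

Lemma nbhd_in_Phi0_neq b x : L x -> Phi x 0 <> Some b ->
  nbhd_in L x (fun y => Phi y 0 <> Some b).
Proof.
move=> Lx; apply: (nbhd_in_of_open (openA_cyl [::] [:: b])) Lx => y Ly.
exact: cyl_not_letter (PhiS Ly).
Qed.

Lemma first_letter_class_clopen b :
  (forall x, first_letter_class L Phi (Some b) x ->
     nbhd_in L x (first_letter_class L Phi (Some b))) /\
  (forall x, L x -> ~ first_letter_class L Phi (Some b) x ->
     nbhd_in L x (fun y => ~ first_letter_class L Phi (Some b) y)).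
Proof.
split=> [x [Lx Hx]|x Lx Hx].
  by apply: (nbhd_in_mono (nbhd_in_Phi0_eq Lx Hx)) => y Ly; split.
have Hb : Phi x 0 <> Some b by move=> Hb; apply: Hx.
by apply: (nbhd_in_mono (nbhd_in_Phi0_neq Lx Hb)) => y Ly Hy [].
Qed.

Lemma Phi_emptyseq x : L x -> Phi x 0 = None -> Phi x = emptyseq.
Proof.
move=> Lx H0; apply: functional_extensionality => n.
exact: SigmaA_None_ge (PhiS Lx) H0 _.
Qed.

Lemma first_letter_class_fin_defined a :
  fin_defined L (fun x => L x /\ Phi x = emptyseq) ->
  fin_defined L (first_letter_class L Phi a).
Proof.
move=> Hfd; case: a => [b|]; last first.
  apply: fin_defined_ext Hfd _ => x.
  by split=> -[Lx H]; split=> //; [rewrite H|apply: Phi_emptyseq].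
have [HC HnC] := first_letter_class_clopen b.
apply: fin_defined_of_prefix_determined LS _ _ _ => [x []//|x Cx|x Lx Cx].
  exact: nbhd_in_prefix_determined LS (HC x Cx).
exact: nbhd_in_prefix_determined LS (HnC x Lx Cx).
Qed.

Lemma sliding_block_code_of_continuous :
  fin_defined L (fun x => L x /\ Phi x = emptyseq) ->
  sliding_block_code L G Phi (first_letter_class L Phi).
Proof.
move=> Hfd; split; first by move=> a x [].
split; first by move=> x Lx; exists (Phi x 0); split=> // a' [].
split.
  move=> b Hb x [Lx Hx]; apply: Hb; split=> //; exists (Phi x); split; first exact: PhiG.
  by exists 0 => -[|] // _; rewrite Hx.
split; first by move=> a; apply: first_letter_class_fin_defined.
split.
  move=> x [Lx Hx]; split; first exact: Lsh.
  by rewrite Phi_shift // /shift (Phi_emptyseq Lx Hx).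
split.
  move=> x Lx n a; rewrite /first_letter_class Phi_iter_shift // addn0.
  by split=> [<-|[]//]; split=> //; apply: shift_stable_iter.
move=> b _; have [HC HnC] := first_letter_class_clopen b.
by apply: fin_union_cyl_of_clopen HL.1 _ HC HnC => x [].
Qed.

End ContinuousShiftCommuting.

Section SlidingBlockCode.
Variables (A B : countType) (L : sq A -> Prop) (G : sq B -> Prop) (Phi : sq A -> sq B).
Variable C : option B -> sq A -> Prop.
Hypothesis LS : forall y, L y -> SigmaA y.
Hypothesis Lsh : forall x, L x -> L (shift x).
Hypothesis PhiS : forall x, L x -> SigmaA (Phi x).
Hypothesis Phi0 : L emptyseq -> Phi emptyseq = emptyseq.
Hypothesis C_letters : forall b : B, ~ letters G b -> forall x, ~ C (Some b) x.
Hypothesis Phi_code : forall x, L x -> forall n a, Phi x n = a <-> C a (iter n (@shift A) x).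
Hypothesis C_cyl : forall b : B, letters G b -> fin_union_cyl L (C (Some b)).

Lemma Phi_shift_code x n : L x -> Phi (shift x) n = shift (Phi x) n.
Proof.
move=> Lx; apply/(Phi_code (Lsh Lx)); rewrite -iterSr.
exact/(Phi_code Lx).
Qed.

(* If x stops before position i then sigma^i x is the empty sequence, which
   lies in C_eps. *)
Lemma defined_of_Phi_defined x i k : L x -> Phi x i <> None -> k <= i -> x k <> None.
Proof.
move=> Lx Hi Hk Hxk; apply: Hi.
have E : iter i (@shift A) x = emptyseq.
  apply: functional_extensionality => m; rewrite iter_shiftE.
  exact: SigmaA_None_ge (LS Lx) Hxk (leq_trans Hk (leq_addr _ _)).
have LO : L emptyseq by rewrite -E; apply: shift_stable_iter.
by apply/(Phi_code Lx); rewrite E; apply/(Phi_code LO 0); rewrite Phi0.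
Qed.

Lemma nbhd_in_Phi_eq x i b : L x -> (forall j, j < i -> x j <> None) ->
  Phi x i = Some b -> nbhd_in L x (fun y => Phi y i = Some b).
Proof.
move=> Lx Hj /(Phi_code Lx) Cb.
case: (classic (letters G b)) => Hl; last by case: (C_letters Hl Cb).
have [cs0 Hcs0] := C_cyl Hl.
have [_ [c [Hc Hcx]]] := proj1 (Hcs0 _) Cb.
have Hc1 : cyls [:: c] (iter i (@shift A) x) by move=> c' /[!inE] /eqP ->.
have [cs [Hcs Hy]] := cyls_iter_shift (LS Lx) Hj Hc1.
exists cs; split=> // y Ly /Hy Hy'; apply/(Phi_code Ly)/Hcs0.
by split; [apply: shift_stable_iter|exists c; split=> //; apply: Hy'; apply: mem_head].
Qed.

Lemma nbhd_in_Phi_neq x i b : L x -> (forall j, j < i -> x j <> None) ->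
  Phi x i <> Some b -> nbhd_in L x (fun y => Phi y i <> Some b).
Proof.
move=> Lx Hj Hb.
case: (classic (letters G b)) => Hl; last first.
  by exists [::]; split=> // y Ly _ /(Phi_code Ly); apply: C_letters.
have [cs0 Hcs0] := C_cyl Hl.
have Hn c : c \in cs0 -> ~ cyl c.1 c.2 (iter i (@shift A) x).
  move=> Hc Hcx; apply/Hb/(Phi_code Lx)/Hcs0.
  by split; [apply: shift_stable_iter|exists c].
have [cs' [Hcs' Hz]] := cyls_avoid_cyls (SigmaA_iter i (LS Lx)) Hn.
have [cs [Hcs Hy]] := cyls_iter_shift (LS Lx) Hj Hcs'.
exists cs; split=> // y Ly /Hy Hy' /(Phi_code Ly) /Hcs0 [_ [c [Hc]]].
exact: Hz Hy' c Hc.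
Qed.

Lemma nbhd_in_Phi_cyl x (w F : seq B) : L x -> cyl w F (Phi x) ->
  nbhd_in L x (fun y => cyl w F (Phi y)).
Proof.
move=> Lx [_ [Hp Hm]].
have defined k : k < size w -> x k <> None.
  move=> Hk; apply: defined_of_Phi_defined Lx _ (leqnn k).
  by case: (w) Hk Hp => // a w' Hk /(_ _ Hk) ->; rewrite (nth_map a).
have N1 : nbhd_in L x (fun y => forall j, j < size w -> Phi y j = nth None (map Some w) j).
  apply: nbhd_in_ltn => j Hj.
  have [a _] : exists a : B, True by case: (w) Hj => // a; exists a.
  rewrite (nth_map a) //; apply: nbhd_in_Phi_eq => //; last by rewrite Hp // (nth_map a).
  by move=> k Hk; apply/defined/(ltn_trans Hk).
have N2 : nbhd_in L x (fun y => forall f, f \in F -> Phi y (size w) <> Some f).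
  apply: nbhd_in_all => f Hf; apply: nbhd_in_Phi_neq => //.
  by move=> E; move: Hm; rewrite E Hf.
apply: (nbhd_in_mono (nbhd_in_and N1 N2)) => y Ly [Hy1 Hy2]; split; first exact: PhiS.
split=> //; case E: (Phi y (size w)) => [c|] //; apply/negP => Hc.
exact: Hy2 c Hc E.
Qed.

Lemma continuous_on_code : continuous_on L Phi.
Proof.
move=> V [_ Hop].
exists (fun z => SigmaA z /\ exists x cs, L x /\ V (Phi x) /\ cyls cs x /\
          (forall y, L y -> cyls cs y -> V (Phi y)) /\ cyls cs z).
split.
  split=> [z []//|z [Sz [x [cs [Lx [Vx [Hx [Hall Hz]]]]]]]]; exists cs; split=> //.
  by move=> z' Sz' Hz'; split=> //; exists x, cs.
move=> x Lx; split=> [Vx|[_ [x0 [cs [_ [_ [_ [Hall Hz]]]]]]]]; last exact: Hall.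
have [ds [Hds Hz]] := Hop _ Vx.
have : nbhd_in L x (fun y => forall d, d \in ds -> cyl d.1 d.2 (Phi y)).
  by apply: nbhd_in_all => d Hd; apply: nbhd_in_Phi_cyl => //; apply: Hds.
case=> cs [Hcs Hy]; split; first exact: LS.
exists x, cs; do 4!split=> //.
by move=> y Ly Hy'; apply: Hz; [apply: PhiS|apply: Hy].
Qed.

End SlidingBlockCode.

Theorem mainTheorem1 (A B : countType) (L : sq A -> Prop) (G : sq B -> Prop)
    (Phi : sq A -> sq B) :
  shift_space L -> shift_space G ->
  (forall x, L x -> G (Phi x)) ->
  (L emptyseq -> Phi emptyseq = emptyseq) ->
  fin_defined L (fun x => L x /\ Phi x = emptyseq) ->
  ((continuous_on L Phi /\
    (forall x, L x -> forall n, Phi (shift x) n = shift (Phi x) n))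
   <->
   (exists C : option B -> sq A -> Prop,
      (* {C_a} partition of L indexed by L_G u {eps} *)
      (forall a x, C a x -> L x) /\
      (forall x, L x -> exists a, C a x /\ forall a', C a' x -> a' = a) /\
      (forall b : B, ~ letters G b -> forall x, ~ C (Some b) x) /\
      (forall a, fin_defined L (C a)) /\
      (forall x, C None x -> C None (shift x)) /\
      (* Phi is the sliding block code defined by the partition *)
      (forall x, L x -> forall n a, Phi x n = a <-> C a (iter n (@shift A) x)) /\
      (forall b : B, letters G b -> fin_union_cyl L (C (Some b))))).
Proof.
move=> HL HG PhiG Phi0 Hfd.
have PhiS x : L x -> SigmaA (Phi x) by move/PhiG; apply: HG.1.1.
split=> [[Phi_cont Phi_shift]|[C [_ [_ [C_letters [_ [_ [Phi_code C_cyl]]]]]]]].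
  exists (first_letter_class L Phi).
  exact: sliding_block_code_of_continuous HL PhiG HG.1.1 Phi_cont Phi_shift Hfd.
split; first exact: continuous_on_code HL.1.1 HL.2.1 PhiS Phi0 C_letters Phi_code C_cyl.
by move=> x Lx n; apply: (Phi_shift_code HL.2.1 Phi_code n Lx).
Qed.
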